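(* Let $d>1$, let $F$ be a field of characteristic $0$ or coprime to $d$ with $\mu_{d^2}\subset F$, and let $E/F$ be a cyclic Galois extension of degree $d$. Let $\mathcal{G}=\mathrm{Gal}(F_{\mathrm{sep}}/F)$, $\mathcal{H}=\mathrm{Gal}(F_{\mathrm{sep}}/E)$, and $G=\mathcal{G}/\mathcal{H}=\langle\tau\rangle$, cyclic of order $d$. Consider the discrete $\mathcal{G}$-modules (action through $G$) $\overline{M_1}=\mathbb{Z}/d\mathbb{Z}$ (trivial action), $\overline{M_2}=\overline{M_3}=(\mathbb{Z}/d\mathbb{Z})[G]$ (left multiplication), $\overline{M_4}=\mathbb{Z}/d\mathbb{Z}$ (trivial), and the maps $d_1:\overline{M_1}\to\overline{M_2}$, $n\mapsto n\sum_{g\in G}g$; $d_2:\overline{M_2}\to\overline{M_3}$, $x\mapsto x(1-\tau)$; $d_3:\overline{M_3}\to\overline{M_4}$, $\sum_g c_g g\mapsto \sum_g c_g$; and $h_2:\overline{M_3}\to\overline{M_2}$, $x\mapsto x\sum_{i=0}^{d-1}(-i)\tau^i$. Let $\ell:\overline{M_4}\to\overline{M_3}$ be the additive map $x\mapsto x\cdot 1_G$. Let $n\ge 1$ and let $c\in Z^{n-1}(\mathcal{G},\overline{M_4})$ be an inhomogeneous cocycle, and $\delta$ the coboundary of the (inhomogeneous) bar complex. Then $h_2(\delta(\ell\circ c))$ takes values in $d_1(\overline{M_1})$ and \[ -d_1^{-1}\big(h_2(\delta(\ell\circ c))\big)=-\chi_{\mathcal{H}}\smile c, \] where $\chi_{\mathcal{H}}:\mathcal{G}\to\mathbb{Z}/d\mathbb{Z}$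 is the character with $\chi_{\mathcal{H}}(g)=k$ whenever $g\mathcal{H}=\tau^k$, and $(\chi_{\mathcal{H}}\smile c)(g_1,\dots,g_n)=\chi_{\mathcal{H}}(g_1)\,c(g_2,\dots,g_n)$.
   Context: The left-hand side is the paper's connecting map $\eta(c)$ in the cyclic case; $d_1^{-1}$ denotes the inverse of the injective map $d_1$ on its image. *)

From mathcomp Require Import all_boot all_order all_algebra.
Set Implicit Arguments. Unset Strict Implicit. Unset Printing Implicit Defensive.
Import GRing.Theory.
Local Open Scope ring_scope.

Definition is_group (Gam : Type) (mul : Gam -> Gam -> Gam) (one : Gam)
    (inv : Gam -> Gam) : Prop :=
  [/\ forall x y z, mul x (mul y z) = mul (mul x y) z,
      forall x, mul one x = x, forall x, mul x one = x,
      forall x, mul (inv x) x = one & forall x, mul x (inv x) = one].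

(* An inhomogeneous k-cochain with values in M: a function of k group elements,
   the arguments g_1,...,g_k being given as a function 'I_k -> Gam (0-based). *)
Definition cochain (Gam : Type) (M : Type) (k : nat) := ('I_k -> Gam) -> M.

Section Bar.
Variables (Gam : Type) (mul : Gam -> Gam -> Gam).

Definition ctail k (gs : 'I_k.+1 -> Gam) : 'I_k -> Gam :=
  fun j => gs (lift ord0 j).
Definition cinit k (gs : 'I_k.+1 -> Gam) : 'I_k -> Gam :=
  fun j => gs (widen_ord (leqnSn k) j).
(* for 0-based i < k: (g_1,...,g_{k+1}) |-> (g_1,..,g_{i+1} g_{i+2},..,g_{k+1}) *)
Definition cmerge k (gs : 'I_k.+1 -> Gam) (i : 'I_k) : 'I_k -> Gam :=
  fun j => if (j < i)%N then gs (widen_ord (leqnSn k) j)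
           else if j == i then mul (gs (widen_ord (leqnSn k) j)) (gs (lift ord0 j))
           else gs (lift ord0 j).

Definition cobound (M : zmodType) (act : Gam -> M -> M) k
    (f : cochain Gam M k) : cochain Gam M k.+1 :=
  fun gs => act (gs ord0) (f (ctail gs))
            + \sum_(i < k) (f (cmerge gs i) *~ ((-1) ^+ i.+1))
            + f (cinit gs) *~ ((-1) ^+ k.+1).
End Bar.

(* We identify tau^k with k : 'Z_d (d > 1); an element sum_k c_k tau^k of
   (Z/dZ)[G] is the finite function k |-> c_k. *)
Definition RG (d : nat) := {ffun 'Z_d -> 'Z_d}.

Section GroupRing.
Variable d : nat.

Definition rg_elt (k : 'Z_d) : RG d := [ffun j => (j == k)%:R].
Definition rg_one : RG d := rg_elt 0.
Definition rg_tau : RG d := rg_elt 1.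
Definition rg_scale (a : 'Z_d) (x : RG d) : RG d := [ffun j => a * x j].
Definition rg_mul (x y : RG d) : RG d :=
  [ffun k => \sum_(i : 'Z_d) x i * y (k - i)].
Definition rg_norm : RG d := \sum_(g : 'Z_d) rg_elt g.

Definition d1 (n : 'Z_d) : RG d := rg_scale n rg_norm.
Definition d2 (x : RG d) : RG d := rg_mul x (rg_one - rg_tau).
Definition d3 (x : RG d) : 'Z_d := \sum_(g : 'Z_d) x g.
Definition h2_elt : RG d :=
  \sum_(i < d) rg_scale (- (i%:R)) (rg_elt (i%:R)).
Definition h2 (x : RG d) : RG d := rg_mul x h2_elt.
Definition ell (x : 'Z_d) : RG d := rg_scale x rg_one.

Definition rg_act (k : 'Z_d) (x : RG d) : RG d := rg_mul (rg_elt k) x.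
End GroupRing.

Definition cup_chi (Gam : Type) (d : nat) (chi : Gam -> 'Z_d) k
    (c : cochain Gam 'Z_d k) : cochain Gam 'Z_d k.+1 :=
  fun gs => chi (gs ord0) * c (ctail gs).

(* The cocycle condition for [c] collapses all but the first term of
   [delta (ell o c)]: at [(g_1, ..., g_n)] it is [a (tau^k - 1)] with
   [a = c(g_2, ..., g_n)] and [k = chi g_1].  This element has augmentation 0,
   and on the augmentation kernel [h2] is [x |-> (sum_i i x_i) N] with [N] the
   norm element, because [h2_elt] has coefficient [-i] at [tau^i].  Hence
   [h2 (a (tau^k - 1)) = d1 (k a)], which is [d1] of the cup product. *)

From HB Require Import structures.
From mathcomp Require Import all_boot all_order all_algebra.
From mathcomp Require Import ring.
Import GRing.Theory.
Local Open Scope ring_scope.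

Section CoboundAdditive.
Variables (Gam : Type) (mul : Gam -> Gam -> Gam) (M N : zmodType).
Variables (f : {additive M -> N}) (act : Gam -> N -> N) (k : nat).

Lemma cobound_additive (c : cochain Gam M k) gs :
  cobound mul act (f \o c) gs =
  act (gs ord0) (f (c (ctail gs))) - f (c (ctail gs))
  + f (cobound mul (fun _ x => x) c gs).
Proof.
rewrite /cobound !raddfD raddf_sum !raddfMz /=.
by under [in RHS]eq_bigr do rewrite raddfMz; rewrite -!addrA addKr.
Qed.

Lemma cobound_additive_cocycle (c : cochain Gam M k) gs :
  (forall hs, cobound mul (fun _ x => x) c hs = 0) ->
  cobound mul act (f \o c) gs =
  act (gs ord0) (f (c (ctail gs))) - f (c (ctail gs)).
Proof. by move=> c_cocycle; rewrite cobound_additive c_cocycle raddf0 addr0. Qed.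
End CoboundAdditive.

Lemma sum_delta (R : pzSemiRingType) (I : finType) (k : I) (F : I -> R) :
  \sum_(i : I) (i == k)%:R * F i = F k.
Proof.
rewrite (bigD1 k) //= eqxx mul1r big1 ?addr0 // => i /negbTE ->.
by rewrite mul0r.
Qed.

Section GroupRingMaps.
Variable d : nat.
Implicit Types (a n k j : 'Z_d) (x : RG d).

Lemma rg_eltE k j : rg_elt k j = (j == k)%:R.
Proof. by rewrite ffunE. Qed.

Lemma ellE a j : ell a j = a * (j == 0)%:R.
Proof. by rewrite !ffunE. Qed.

Lemma ell_is_zmod_morphism : zmod_morphism (@ell d).
Proof. by move=> a b; apply/ffunP => j; rewrite !ffunE mulrBl. Qed.

HB.instance Definition _ :=
  GRing.isZmodMorphism.Build 'Z_d (RG d) (@ell d) ell_is_zmod_morphism.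

Lemma rg_actE k x j : rg_act k x j = x (j - k).
Proof.
rewrite ffunE (eq_bigr (fun i => (i == k)%:R * x (j - i))) ?sum_delta //.
by move=> i _; rewrite rg_eltE.
Qed.

Lemma rg_act_ellE k a j : rg_act k (ell a) j = a * (j == k)%:R.
Proof. by rewrite rg_actE ellE subr_eq0. Qed.

Lemma d1E n j : d1 n j = n.
Proof.
rewrite !ffunE sum_ffunE.
rewrite (eq_bigr (fun i => (i == j)%:R * 1)) ?sum_delta ?mulr1 //.
by move=> i _; rewrite rg_eltE eq_sym mulr1.
Qed.

Lemma d1_inj : injective (@d1 d).
Proof. by move=> n n' /(congr1 (fun x : RG d => x 0)); rewrite !d1E. Qed.

Lemma rgBE x y j : (x - y) j = x j - y j.
Proof. by rewrite !ffunE. Qed.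

Lemma d3B x y : d3 (x - y) = d3 x - d3 y.
Proof. by rewrite /d3 -sumrB; apply: eq_bigr => i _; rewrite rgBE. Qed.

Lemma d3_rg_act k x : d3 (rg_act k x) = d3 x.
Proof.
rewrite /d3 (reindex_inj (addIr k)) /=.
by apply: eq_bigr => j _; rewrite rg_actE addrK.
Qed.

Hypothesis d_gt1 : (1 < d)%N.

(* ['Z_d] has [(Zp_trunc d).+2] elements, which is [d] only when [1 < d]. *)
Lemma sum_ord_Zp (R : nmodType) (F : 'Z_d -> R) :
  \sum_(i < d) F i%:R = \sum_(j : 'Z_d) F j.
Proof.
have /= -> :=
  congr1 (fun n : nat => \sum_(i < n) F i%:R) (esym (Zp_cast d_gt1)).
by apply: eq_bigr => i _; rewrite natr_Zp.
Qed.

Lemma h2_eltE k : h2_elt d k = - k.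
Proof.
rewrite sum_ffunE (sum_ord_Zp _ (fun j => rg_scale (- j) (rg_elt j) k)).
rewrite (eq_bigr (fun j => (j == k)%:R * - j)) ?sum_delta // => j _.
by rewrite !ffunE eq_sym mulrC.
Qed.

Lemma h2E x j : h2 x j = \sum_(i : 'Z_d) x i * i - d3 x * j.
Proof.
rewrite ffunE /d3 mulr_suml -sumrB.
by apply: eq_bigr => i _; rewrite h2_eltE opprB mulrBr.
Qed.

Lemma h2_ker_d3 x : d3 x = 0 -> h2 x = d1 (\sum_(i : 'Z_d) x i * i).
Proof. by move=> x_aug0; apply/ffunP => j; rewrite h2E d1E x_aug0 mul0r subr0. Qed.

Lemma h2_rg_act_ell_subr k a : h2 (rg_act k (ell a) - ell a) = d1 (k * a).
Proof.
rewrite h2_ker_d3; last by rewrite d3B d3_rg_act subrr.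
congr d1.
rewrite (eq_bigr (fun i => (i == k)%:R * (a * i) - (i == 0)%:R * (a * i))).
  by rewrite sumrB !sum_delta mulr0 subr0 mulrC.
by move=> i _; rewrite rgBE rg_act_ellE ellE; ring.
Qed.
End GroupRingMaps.

Theorem theorem4p6
  (d : nat) (hd : (1 < d)%N)
  (Gam : Type) (mul : Gam -> Gam -> Gam) (one : Gam) (inv : Gam -> Gam)
  (hGam : is_group mul one inv)
  (chi : Gam -> 'Z_d)
  (chi_mul : forall g h, chi (mul g h) = chi g + chi h)
  (chi_surj : forall k : 'Z_d, exists g, chi g = k)
  (m : nat) (c : cochain Gam 'Z_d m)
  (c_cocycle : forall gs, cobound mul (fun _ (x : 'Z_d) => x) c gs = 0) :
  let X := cobound mul (fun g x => rg_act (chi g) x) (fun gs => ell (c gs)) in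
  (forall gs, exists n1 : 'Z_d, d1 n1 = h2 (X gs)) /\
  (forall gs (n1 : 'Z_d), d1 n1 = h2 (X gs) -> - n1 = - cup_chi chi c gs).
Proof.
move=> X.
have h2X gs : h2 (X gs) = d1 (cup_chi chi c gs).
  rewrite /X (@cobound_additive_cocycle _ _ _ _ (@ell d)) //.
  exact: h2_rg_act_ell_subr.
split=> [gs | gs n1]; first by exists (cup_chi chi c gs).
by rewrite h2X => /d1_inj ->.
Qed.
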